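(* Let $f$ satisfy the standing assumptions below, and for $\xi,u_1\in(0,1)$ let $$F_0(\xi,u_1)=\frac{1}{2\sqrt2}\int_{-1}^{1}\frac{f'\!\left(\frac{1+\mu}{2}\xi+\frac{1-\mu}{2}u_1\right)}{\sqrt{1-\mu}}\,d\mu,\qquad U_0(\xi,u_1)=\frac43\xi+\frac23u_1 .$$ Then, for $u_1$ sufficiently close to $1$, the function $\xi\mapsto -F_0(\xi,u_1)/U_0(\xi,u_1)$ on $(0,1)$ (whose minimum over $0<\xi<1$ is considered) has one and only one critical point in $(0,1)$. Furthermore, this critical point tends to $1/4$ as $u_1\to1$.
   Context: Standing assumptions: $f:(0,1)\to\mathbb{R}$ is the inverse of a smooth strictly decreasing function $u_0:\mathbb{R}\to(0,1)$ with $u_0(-\infty)=1$, $u_0(+\infty)=0$; thus $f$ is smooth with $f'<0$, $\lim_{u\to0}f(u)=+\infty$, $\lim_{u\to1}f(u)=-\infty$; moreover $f'''(u)<0$ for $u$ in a neighborhood of $0$ and in a neighborhood of $1$. *)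

From Stdlib Require Import Reals.
From Coquelicot Require Import Coquelicot.
Open Scope R_scope.

Definition standing_assumptions (f : R -> R) : Prop :=
  (forall (n : nat) (u : R), 0 < u < 1 -> ex_derive_n f n u) /\
  (forall u, 0 < u < 1 -> Derive f u < 0) /\
  filterlim f (at_right 0) (Rbar_locally p_infty) /\
  filterlim f (at_left 1) (Rbar_locally m_infty) /\
  (exists a, 0 < a /\
     (forall u, 0 < u < a -> Derive_n f 3 u < 0) /\
     (forall u, 1 - a < u < 1 -> Derive_n f 3 u < 0)).

(* F_0(xi,u1) = 1/(2 sqrt 2) * int_{-1}^{1} f'((1+mu)/2 xi + (1-mu)/2 u1)/sqrt(1-mu) dmu,
   an improper Riemann integral (integrable singularity at mu = 1). *)
Definition F0 (f : R -> R) (xi u1 : R) : R :=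
  / (2 * sqrt 2) *
  RInt_gen (fun mu => Derive f ((1 + mu) / 2 * xi + (1 - mu) / 2 * u1) / sqrt (1 - mu))
           (at_point (-1)) (at_left 1).

Definition U0 (xi u1 : R) : R := 4 / 3 * xi + 2 / 3 * u1.

Definition G0 (f : R -> R) (u1 : R) (xi : R) : R := - F0 f xi u1 / U0 xi u1.

Definition critical_point (f : R -> R) (u1 xi : R) : Prop :=
  0 < xi < 1 /\ is_derive (G0 f u1) xi 0.

From Stdlib Require Import Reals Lra Psatz Classical.
From Coquelicot Require Import Coquelicot.
Open Scope R_scope.

(* The substitution mu = 1 - 2 s^2 turns F0 into the proper integral
   int_0^1 f'(xi + s^2 (u1 - xi)) ds, which can be differentiated in xi under the
   integral sign.  The derivative of -F0/U0 is -N/U0^2 with N = F0_xi U0 - (4/3) F0,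
   and N_xi = F0_xixi U0.  Everything is then driven by f(u1) -> -oo as u1 -> 1:
   cutting the path where it crosses a fixed c close to 1, the piece near u1 is
   computed by the fundamental theorem of calculus in terms of f(u1) - f(c), while
   the remaining piece stays bounded.  Since f''' < 0 near 0 and near 1 (which forces
   f'' < 0 near 1), this gives F0_xixi < 0 on the whole of (0,1), so N is strictly
   decreasing, and N(xi) ~ (f(c) - f(u1)) (2 - 8 xi) / (6 (1 - xi)^2), which is
   positive for xi < 1/4 and negative for xi > 1/4 once u1 is close to 1.  The
   intermediate value theorem gives exactly one zero of N, squeezed towards 1/4. *)

Ltac R_eq := match goal with |- ?a = ?b => change (@eq R a b) end;
  cbn -[Derive Derive_n].

Lemma is_derive_eq (g : R -> R) x l l' : is_derive g x l -> l = l' -> is_derive g x l'.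
Proof. intros H <-; exact H. Qed.

Lemma is_derive_continuous (g : R -> R) x l : is_derive g x l -> continuous g x.
Proof.
  intros H. apply (ex_derive_continuous (K := R_AbsRing) (V := R_NormedModule)).
  now exists l.
Qed.

Lemma is_derive_affine a b x : is_derive (fun m => a + b * m) x b.
Proof. auto_derive; [easy | ring]. Qed.

Lemma continuous_affine a b x : continuous (fun m => a + b * m) x.
Proof. exact (is_derive_continuous _ _ _ (is_derive_affine a b x)). Qed.

Lemma continuous_one_minus_sq s : continuous (fun s => 1 - s * s) s.
Proof. apply (is_derive_continuous _ _ (- (2 * s))). auto_derive; [easy | ring]. Qed.

Lemma continuous_one_minus_sq_sq s : continuous (fun s => (1 - s * s) * (1 - s * s)) s.
Proof. apply (continuous_mult (K := R_AbsRing)); apply continuous_one_minus_sq. Qed.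

Lemma filter_prod_at_point_at_left a b (P : R * R -> Prop) :
  a < b -> (forall c, a < c < b -> P (a, c)) -> filter_prod (at_point a) (at_left b) P.
Proof.
  intros Hab HP.
  apply Filter_prod with (Q := fun x => x = a) (R := fun c => a < c < b); [easy| |].
  - assert (Hd : 0 < b - a) by lra. exists (mkposreal _ Hd). intros y Hy Hlt.
    change (Rabs (y - b) < b - a) in Hy. apply Rabs_def2 in Hy. lra.
  - intros x c -> Hc. now apply HP.
Qed.

Lemma locally_of_open_interval a b x (P : R -> Prop) :
  a < x < b -> (forall y, a < y < b -> P y) -> locally x P.
Proof.
  intros Hx HP. assert (Hr : 0 < Rmin (x - a) (b - x)) by (apply Rmin_pos; lra).
  exists (mkposreal _ Hr). intros y Hy. change (Rabs (y - x) < Rmin (x - a) (b - x)) in Hy.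
  apply Rabs_def2 in Hy. pose proof (Rmin_l (x - a) (b - x)). pose proof (Rmin_r (x - a) (b - x)).
  apply HP. lra.
Qed.

Lemma MVT_interval (h dh : R -> R) p q : p < q ->
  (forall x, p <= x <= q -> is_derive h x (dh x)) ->
  exists c, p <= c <= q /\ h q - h p = dh c * (q - p).
Proof.
  intros Hpq Hd.
  destruct (MVT_gen h p q dh) as [c [Hc E]].
  - intros x Hx. rewrite Rmin_left, Rmax_right in Hx by lra. apply Hd; lra.
  - intros x Hx. rewrite Rmin_left, Rmax_right in Hx by lra.
    apply continuity_pt_filterlim. apply (is_derive_continuous _ _ (dh x)), Hd; lra.
  - rewrite Rmin_left, Rmax_right in Hc by lra. now exists c.
Qed.

Lemma nonpos_derive_antitone (h dh : R -> R) p q : p <= q ->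
  (forall x, p <= x <= q -> is_derive h x (dh x)) ->
  (forall x, p <= x <= q -> dh x <= 0) -> h q <= h p.
Proof.
  intros Hpq Hd Hs. destruct (Req_dec p q) as [->|Hne]; [lra|].
  destruct (MVT_interval h dh p q) as [c [Hc E]]; [lra|easy|].
  specialize (Hs c Hc). nra.
Qed.

Lemma neg_derive_decreasing (h dh : R -> R) p q : p < q ->
  (forall x, p <= x <= q -> is_derive h x (dh x)) ->
  (forall x, p <= x <= q -> dh x < 0) -> h q < h p.
Proof.
  intros Hpq Hd Hs. destruct (MVT_interval h dh p q) as [c [Hc E]]; [easy|easy|].
  specialize (Hs c Hc). nra.
Qed.

Lemma RInt_le_const (g : R -> R) p q m : p <= q -> ex_RInt g p q ->
  (forall s, p < s < q -> g s <= m) -> RInt g p q <= (q - p) * m.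
Proof.
  intros Hpq Hg Hm. replace ((q - p) * m) with (RInt (fun _ => m) p q).
  - apply RInt_le; auto. apply ex_RInt_const.
  - now rewrite RInt_const.
Qed.

Lemma RInt_le_scal_is_RInt (g h : R -> R) p q k I : p <= q -> ex_RInt g p q ->
  is_RInt h p q I -> (forall s, p < s < q -> g s <= k * h s) -> RInt g p q <= k * I.
Proof.
  intros Hpq Hg Hh Hs. pose proof (is_RInt_scal _ _ _ k _ Hh) as HkI.
  change (k * I) with (scal k I). rewrite <- (is_RInt_unique _ _ _ _ HkI).
  apply RInt_le; auto. now exists (scal k I).
Qed.

Lemma RInt_ge_scal_is_RInt (g h : R -> R) p q k I : p <= q -> ex_RInt g p q ->
  is_RInt h p q I -> (forall s, p < s < q -> k * h s <= g s) -> k * I <= RInt g p q.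
Proof.
  intros Hpq Hg Hh Hs. pose proof (is_RInt_scal _ _ _ k _ Hh) as HkI.
  change (k * I) with (scal k I). rewrite <- (is_RInt_unique _ _ _ _ HkI).
  apply RInt_le; auto. now exists (scal k I).
Qed.

Lemma filterlim_m_infty_at_left_1_lt (g : R -> R) M :
  filterlim g (at_left 1) (Rbar_locally m_infty) ->
  exists d, 0 < d /\ forall x, 1 - d < x < 1 -> g x < M.
Proof.
  intros Hg. destruct (Hg (fun y => y < M)) as [d Hd]; [now exists M|].
  exists d. split; [apply cond_pos|]. intros x Hx. apply Hd; [|lra].
  change (Rabs (x - 1) < d). rewrite Rabs_left; lra.
Qed.

Lemma locally_2d_in_01 (g : R -> R -> R) x y :
  continuity_2d_pt g x y -> 0 < g x y < 1 -> locally_2d (fun u v => 0 < g u v < 1) x y.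
Proof.
  intros Hc Hin. assert (He : 0 < Rmin (g x y) (1 - g x y)) by (apply Rmin_pos; lra).
  eapply locally_2d_impl; [|exact (Hc (mkposreal _ He))].
  apply locally_2d_forall. intros u v Hu. simpl in Hu.
  pose proof (Rmin_l (g x y) (1 - g x y)). pose proof (Rmin_r (g x y) (1 - g x y)).
  apply Rabs_def2 in Hu. lra.
Qed.

Lemma continuous_bounded (g : R -> R) p q : p <= q ->
  (forall x, p <= x <= q -> continuous g x) ->
  exists B, forall x, p <= x <= q -> Rabs (g x) <= B.
Proof.
  intros Hpq Hg.
  assert (Hc : forall x, p <= x <= q -> continuity_pt g x).
  { intros x Hx. apply continuity_pt_filterlim, Hg, Hx. }
  destruct (continuity_ab_maj g p q Hpq Hc) as [M [HM _]].
  destruct (continuity_ab_min g p q Hpq Hc) as [m [Hm _]].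
  exists (Rmax (g M) (- g m)). intros x Hx. specialize (HM x Hx). specialize (Hm x Hx).
  pose proof (Rmax_l (g M) (- g m)). pose proof (Rmax_r (g M) (- g m)).
  apply Rabs_le. lra.
Qed.

Lemma decreasing_unique_zero (g : R -> R) p q : 0 < p < q -> q < 1 ->
  (forall x, 0 < x < 1 -> continuous g x) ->
  (forall x y, 0 < x -> x < y -> y < 1 -> g y < g x) -> 0 < g p -> g q < 0 ->
  (exists! z, 0 < z < 1 /\ g z = 0) /\ (forall z, 0 < z < 1 -> g z = 0 -> p < z < q).
Proof.
  intros Hpq Hq Hc Hdec Hp Hq0.
  assert (Hloc : forall z, 0 < z < 1 -> g z = 0 -> p < z < q).
  { intros z Hz Hz0. split.
    - destruct (Rtotal_order p z) as [|[<-|Hzp]]; [easy|lra|].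
      specialize (Hdec z p ltac:(lra) Hzp ltac:(lra)). lra.
    - destruct (Rtotal_order z q) as [|[->|Hqz]]; [easy|lra|].
      specialize (Hdec q z ltac:(lra) Hqz ltac:(lra)). lra. }
  split; [|exact Hloc].
  destruct (Ranalysis5.IVT_interv (fun x => - g x) p q) as [z [Hz Hz0]]; [|lra|lra|lra|].
  { intros x Hx. apply continuity_pt_opp, continuity_pt_filterlim, Hc. lra. }
  exists z. split; [split; lra|].
  intros y [Hy Hy0].
  destruct (Rtotal_order z y) as [Hlt|[Heq|Hgt]]; [|easy|].
  - specialize (Hdec z y ltac:(lra) Hlt ltac:(lra)). lra.
  - specialize (Hdec y z ltac:(lra) Hgt ltac:(lra)). lra.
Qed.

Lemma Rmult_nonpos_le_r y t : y <= 0 -> t <= 1 -> y <= y * t.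
Proof. intros. nra. Qed.

Lemma Rmult_nonpos_ge_r y t : y <= 0 -> 1 <= t -> y * t <= y.
Proof. intros. nra. Qed.

Lemma Rdiv_ge_1 t s : 0 < s <= t -> 1 <= t / s.
Proof.
  intros Hs. replace (t / s) with (1 + (t - s) / s) by (field; lra).
  pose proof (Rdiv_le_0_compat (t - s) s ltac:(lra) ltac:(lra)). lra.
Qed.

Lemma Rabs_le_between x B : Rabs x <= B -> - B <= x <= B.
Proof.
  intros H. pose proof (Rle_abs x). pose proof (Rle_abs (- x)). rewrite Rabs_Ropp in *. lra.
Qed.

Lemma lt_half_mul_of_div_lt K k g : 0 <= K -> 0 < k -> 2 * K / k < g ->
  0 < g /\ K < g / 2 * k.
Proof.
  intros HK Hk H. split; [pose proof (Rdiv_le_0_compat (2 * K) k ltac:(lra) Hk); lra|].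
  apply Rmult_lt_compat_r with (r := k) in H; [|easy].
  replace (2 * K / k * k) with (2 * K) in H by (field; lra).
  replace (g / 2 * k) with (g * k / 2) by field. lra.
Qed.

Lemma lt_of_Rmin_lt_l d1 d2 u : 1 - Rmin d1 d2 < u -> 1 - d1 < u.
Proof. pose proof (Rmin_l d1 d2). lra. Qed.

Lemma lt_of_Rmin_lt_r d1 d2 u : 1 - Rmin d1 d2 < u -> 1 - d2 < u.
Proof. pose proof (Rmin_r d1 d2). lra. Qed.

(** * The path s |-> xi + s^2 (u1 - xi) *)

Definition interp (xi u1 s : R) := xi + s * s * (u1 - xi).

Lemma affine_in_01 xi u1 w : 0 < xi < 1 -> 0 < u1 < 1 ->
  0 <= w <= 1 + Rmin u1 (1 - u1) / 2 -> 0 < xi + w * (u1 - xi) < 1.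
Proof.
  intros Hxi Hu1 Hw. pose proof (Rmin_l u1 (1 - u1)). pose proof (Rmin_r u1 (1 - u1)).
  destruct (Rle_lt_dec w 1) as [Hle|Hgt].
  - assert (0 <= (1 - w) * xi) by (apply Rmult_le_pos; lra).
    assert (0 <= w * u1) by (apply Rmult_le_pos; lra).
    assert (0 <= (1 - w) * (1 - xi)) by (apply Rmult_le_pos; lra).
    assert (0 <= w * (1 - u1)) by (apply Rmult_le_pos; lra).
    destruct (Rle_lt_dec w (1/2)).
    + assert (0 < (1 - w) * xi) by (apply Rmult_lt_0_compat; lra).
      assert (0 < (1 - w) * (1 - xi)) by (apply Rmult_lt_0_compat; lra). nra.
    + assert (0 < w * u1) by (apply Rmult_lt_0_compat; lra).
      assert (0 < w * (1 - u1)) by (apply Rmult_lt_0_compat; lra). nra.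
  - assert (0 <= (w - 1) * (1 - (u1 - xi))) by (apply Rmult_le_pos; lra).
    assert (0 <= (w - 1) * (1 + (u1 - xi))) by (apply Rmult_le_pos; lra).
    split; nra.
Qed.

Lemma interp_in_01 xi u1 s : 0 < xi < 1 -> 0 < u1 < 1 -> 0 <= s <= 1 ->
  0 < interp xi u1 s < 1.
Proof.
  intros Hxi Hu1 Hs. apply affine_in_01; auto.
  pose proof (Rmin_pos u1 (1 - u1) ltac:(lra) ltac:(lra)). nra.
Qed.

Lemma interp_0 xi u1 : interp xi u1 0 = xi.
Proof. unfold interp. ring. Qed.

Lemma interp_1 xi u1 : interp xi u1 1 = u1.
Proof. unfold interp. ring. Qed.

Lemma u1_minus_interp xi u1 s : u1 - interp xi u1 s = (u1 - xi) * (1 - s * s).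
Proof. unfold interp. ring. Qed.

Lemma interp_le_interp xi u1 s t : xi <= u1 -> 0 <= s <= t -> interp xi u1 s <= interp xi u1 t.
Proof. intros H1 H2. unfold interp. assert (s * s <= t * t) by nra. nra. Qed.

Lemma interp_sqrt xi u1 c : xi < u1 -> xi <= c ->
  interp xi u1 (sqrt ((c - xi) / (u1 - xi))) = c.
Proof.
  intros H1 H2. unfold interp. rewrite sqrt_sqrt.
  - field. lra.
  - apply Rdiv_le_0_compat; lra.
Qed.

Lemma is_derive_interp_xi u1 s y : is_derive (fun u => interp u u1 s) y (1 - s * s).
Proof. unfold interp. auto_derive; [easy | ring]. Qed.

Lemma is_derive_interp_s xi u1 s : is_derive (interp xi u1) s (2 * s * (u1 - xi)).
Proof. unfold interp. auto_derive; [easy | ring]. Qed.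

Lemma interp_continuity_2d u1 x y : continuity_2d_pt (fun u v => interp u u1 v) x y.
Proof.
  unfold interp. apply continuity_2d_pt_plus; [apply continuity_2d_pt_id1|].
  apply continuity_2d_pt_mult.
  - apply continuity_2d_pt_mult; apply continuity_2d_pt_id2.
  - apply continuity_2d_pt_minus; [apply continuity_2d_pt_const | apply continuity_2d_pt_id1].
Qed.

Lemma continuous_comp_interp (h : R -> R) xi u1 s :
  (forall x, 0 < x < 1 -> continuous h x) -> 0 < xi < 1 -> 0 < u1 < 1 -> 0 <= s <= 1 ->
  continuous (fun s => h (interp xi u1 s)) s.
Proof.
  intros Hh Hxi Hu1 Hs. apply (continuous_comp (interp xi u1) h).
  - exact (is_derive_continuous _ _ _ (is_derive_interp_s xi u1 s)).
  - apply Hh, interp_in_01; auto.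
Qed.

Lemma ex_RInt_interp_mul (h m : R -> R) xi u1 p q :
  (forall x, 0 < x < 1 -> continuous h x) -> (forall s, continuous m s) ->
  0 < xi < 1 -> 0 < u1 < 1 -> 0 <= p <= q -> q <= 1 ->
  ex_RInt (fun s => h (interp xi u1 s) * m s) p q.
Proof.
  intros Hh Hm Hxi Hu1 Hp Hq. apply (ex_RInt_continuous (V := R_CompleteNormedModule)).
  intros z Hz. rewrite Rmin_left, Rmax_right in Hz by lra.
  apply (continuous_mult (K := R_AbsRing) (fun s => h (interp xi u1 s)) m).
  - apply continuous_comp_interp; auto; lra.
  - apply Hm.
Qed.

Lemma ex_RInt_interp (h : R -> R) xi u1 p q :
  (forall x, 0 < x < 1 -> continuous h x) ->
  0 < xi < 1 -> 0 < u1 < 1 -> 0 <= p <= q -> q <= 1 ->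
  ex_RInt (fun s => h (interp xi u1 s)) p q.
Proof.
  intros Hh Hxi Hu1 Hp Hq. apply (ex_RInt_continuous (V := R_CompleteNormedModule)).
  intros z Hz. rewrite Rmin_left, Rmax_right in Hz by lra.
  apply continuous_comp_interp; auto; lra.
Qed.

Lemma is_RInt_interp_derive (H dH : R -> R) xi u1 p q :
  (forall x, 0 < x < 1 -> is_derive H x (dH x)) ->
  (forall x, 0 < x < 1 -> continuous dH x) ->
  0 < xi < 1 -> 0 < u1 < 1 -> 0 <= p <= q -> q <= 1 ->
  is_RInt (fun s => dH (interp xi u1 s) * (2 * s * (u1 - xi))) p q
    (H (interp xi u1 q) - H (interp xi u1 p)).
Proof.
  intros HD HC Hxi Hu1 Hp Hq.
  apply (is_RInt_derive (V := R_CompleteNormedModule) (fun s => H (interp xi u1 s)));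
    intros x Hx; rewrite Rmin_left, Rmax_right in Hx by lra.
  - eapply is_derive_eq.
    + apply (is_derive_comp H (interp xi u1)); [apply HD, interp_in_01; auto; lra|].
      apply is_derive_interp_s.
    + R_eq. ring.
  - apply (continuous_mult (K := R_AbsRing) (fun s => dH (interp xi u1 s))).
    + apply continuous_comp_interp; auto; lra.
    + apply (continuous_ext (fun s => 0 + 2 * (u1 - xi) * s)); [intros t; simpl; ring|].
      apply continuous_affine.
Qed.

Lemma is_derive_comp_interp_mul (h dh : R -> R) u1 y t m :
  is_derive h (interp y u1 t) (dh (interp y u1 t)) ->
  is_derive (fun u => h (interp u u1 t) * m) y (dh (interp y u1 t) * (1 - t * t) * m).
Proof.
  intros Hh.
  pose proof (is_derive_comp h (fun u => interp u u1 t) y _ _ Hh (is_derive_interp_xi u1 t y))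
    as H1.
  eapply is_derive_eq; [exact (is_derive_scal_l (V := R_NormedModule) _ _ _ m H1)|].
  R_eq. ring.
Qed.

Lemma continuity_2d_interp_integrand (dh m : R -> R) u1 x t :
  continuous dh (interp x u1 t) -> continuous m t ->
  continuity_2d_pt (fun u v => dh (interp u u1 v) * (1 - v * v) * m v) x t.
Proof.
  intros Hdh Hm. apply continuity_2d_pt_mult; [apply continuity_2d_pt_mult|].
  - apply (continuity_1d_2d_pt_comp dh (fun u v => interp u u1 v)).
    + now apply continuity_pt_filterlim.
    + apply interp_continuity_2d.
  - apply continuity_2d_pt_minus; [apply continuity_2d_pt_const|].
    apply continuity_2d_pt_mult; apply continuity_2d_pt_id2.
  - apply (continuity_1d_2d_pt_comp m (fun u v => v)).
    + now apply continuity_pt_filterlim.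
    + apply continuity_2d_pt_id2.
Qed.

Lemma is_derive_RInt_interp (h dh m : R -> R) u1 xi :
  (forall x, 0 < x < 1 -> is_derive h x (dh x)) ->
  (forall x, 0 < x < 1 -> continuous dh x) -> (forall s, continuous m s) ->
  0 < xi < 1 -> 0 < u1 < 1 ->
  is_derive (fun u => RInt (fun s => h (interp u u1 s) * m s) 0 1) xi
    (RInt (fun s => dh (interp xi u1 s) * (1 - s * s) * m s) 0 1).
Proof.
  intros Hh Hdh Hm Hxi Hu1.
  assert (Hd : forall y t, 0 < interp y u1 t < 1 ->
    is_derive (fun u => h (interp u u1 t) * m t) y (dh (interp y u1 t) * (1 - t * t) * m t)).
  { intros y t Hy. apply is_derive_comp_interp_mul, Hh, Hy. }
  assert (Hch : forall x, 0 < x < 1 -> continuous h x).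
  { intros x Hx. exact (is_derive_continuous _ _ _ (Hh x Hx)). }
  eapply is_derive_eq.
  - apply (is_derive_RInt_param (fun u s => h (interp u u1 s) * m s)).
    + apply (locally_of_open_interval 0 1); auto. intros y Hy t Ht.
      rewrite Rmin_left, Rmax_right in Ht by lra.
      eexists. apply Hd, interp_in_01; auto.
    + intros t Ht. rewrite Rmin_left, Rmax_right in Ht by lra.
      apply continuity_2d_pt_ext_loc with (f := fun u v => dh (interp u u1 v) * (1 - v * v) * m v).
      * eapply locally_2d_impl;
          [|apply (locally_2d_in_01 (fun u v => interp u u1 v));
            [apply interp_continuity_2d | apply interp_in_01; auto]].
        apply locally_2d_forall. intros u v Huv. symmetry. apply is_derive_unique, Hd, Huv.
      * apply continuity_2d_interp_integrand; [apply Hdh, interp_in_01; auto | apply Hm].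
    + apply (locally_of_open_interval 0 1); auto. intros y Hy.
      apply ex_RInt_interp_mul; auto; lra.
  - apply RInt_ext. intros t Ht. rewrite Rmin_left, Rmax_right in Ht by lra.
    apply is_derive_unique, Hd, interp_in_01; auto; lra.
Qed.

(** * F0 as an integral along the path *)

Lemma U0_pos xi u1 : 0 < xi < 1 -> 0 < u1 < 1 -> 0 < U0 xi u1.
Proof. unfold U0. lra. Qed.

Lemma is_derive_U0 u1 x : is_derive (fun xi => U0 xi u1) x (4 / 3).
Proof. unfold U0. auto_derive; [easy | ring]. Qed.

Definition F0s (f : R -> R) u1 xi := RInt (fun s => Derive f (interp xi u1 s)) 0 1.

Definition F0s_xi (f : R -> R) u1 xi :=
  RInt (fun s => Derive_n f 2 (interp xi u1 s) * (1 - s * s)) 0 1.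

Definition F0s_xixi (f : R -> R) u1 xi :=
  RInt (fun s => Derive_n f 3 (interp xi u1 s) * ((1 - s * s) * (1 - s * s))) 0 1.

Definition G0_numer (f : R -> R) u1 xi := F0s_xi f u1 xi * U0 xi u1 - 4 / 3 * F0s f u1 xi.

Section Smooth.
Variable f : R -> R.
Hypothesis f_smooth : forall (n : nat) (u : R), 0 < u < 1 -> ex_derive_n f n u.

Lemma is_derive_Derive_n n x : 0 < x < 1 -> is_derive (Derive_n f n) x (Derive_n f (S n) x).
Proof. intros Hx. apply Derive_correct. exact (f_smooth (S n) x Hx). Qed.

Lemma is_derive_f x : 0 < x < 1 -> is_derive f x (Derive f x).
Proof. exact (is_derive_Derive_n 0 x). Qed.

Lemma continuous_Derive_n n x : 0 < x < 1 -> continuous (Derive_n f n) x.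
Proof. intros Hx. exact (is_derive_continuous _ _ _ (is_derive_Derive_n n x Hx)). Qed.

Lemma is_derive_F0s u1 xi : 0 < xi < 1 -> 0 < u1 < 1 ->
  is_derive (F0s f u1) xi (F0s_xi f u1 xi).
Proof.
  intros Hxi Hu1.
  pose proof (is_derive_RInt_interp (Derive f) (Derive_n f 2) (fun _ => 1) u1 xi
    (is_derive_Derive_n 1) (continuous_Derive_n 2) (fun s => continuous_const 1 s) Hxi Hu1) as H.
  eapply is_derive_ext; [|eapply is_derive_eq; [exact H|]].
  - intros t. apply RInt_ext. intros s _. R_eq; ring.
  - apply RInt_ext. intros s _. R_eq; ring.
Qed.

Lemma is_derive_F0s_xi u1 xi : 0 < xi < 1 -> 0 < u1 < 1 ->
  is_derive (F0s_xi f u1) xi (F0s_xixi f u1 xi).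
Proof.
  intros Hxi Hu1.
  pose proof (is_derive_RInt_interp (Derive_n f 2) (Derive_n f 3) (fun s => 1 - s * s) u1 xi
    (is_derive_Derive_n 2) (continuous_Derive_n 3)
    continuous_one_minus_sq Hxi Hu1) as H.
  eapply is_derive_eq; [exact H|]. apply RInt_ext. intros s _. R_eq; ring.
Qed.

Section Substitution.
Variables xi u1 : R.
Hypothesis Hxi : 0 < xi < 1.
Hypothesis Hu1 : 0 < u1 < 1.

(* The substitution is mu = 1 - 2 s^2, i.e. s = sg mu.  Extending the path a little
   beyond s = 1 (up to r > 1) makes A differentiable at s = 1, i.e. at mu = -1. *)
Let e := Rmin u1 (1 - u1) / 2.
Let r := sqrt (1 + e).
Let k s := Derive f (interp xi u1 s).
Let A b := RInt k 0 b.
Let sg mu := sqrt ((1 - mu) / 2).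
Let Phi mu := - (2 * sqrt 2) * A (sg mu).
Let F0_integrand mu := Derive f ((1 + mu) / 2 * xi + (1 - mu) / 2 * u1) / sqrt (1 - mu).

Lemma e_pos : 0 < e.
Proof. pose proof (Rmin_pos u1 (1 - u1) ltac:(lra) ltac:(lra)). unfold e. lra. Qed.

Lemma interp_in_01_within_r t : Rabs t < r -> 0 < interp xi u1 t < 1.
Proof.
  intros Ht. apply affine_in_01; auto. pose proof e_pos. pose proof (Rabs_pos t).
  assert (Hrr : r * r = 1 + e) by (apply sqrt_sqrt; lra).
  assert (Htt : Rabs t * Rabs t <= r * r) by nra.
  rewrite <- Rabs_mult, Rabs_right in Htt by nra. fold e. nra.
Qed.

Lemma continuous_k t : Rabs t < r -> continuous k t.
Proof.
  intros Ht. apply (continuous_comp (interp xi u1) (Derive f)).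
  - exact (is_derive_continuous _ _ _ (is_derive_interp_s xi u1 t)).
  - apply (continuous_Derive_n 1), interp_in_01_within_r, Ht.
Qed.

Lemma is_derive_A t : Rabs t < r -> is_derive A t (k t).
Proof.
  intros Ht. apply (is_derive_RInt k A 0 t); [|now apply continuous_k].
  assert (Hp : 0 < r - Rabs t) by lra.
  exists (mkposreal _ Hp). intros b Hb. change R in b. change (Rabs (b - t) < r - Rabs t) in Hb.
  apply (RInt_correct (V := R_CompleteNormedModule)).
  apply (ex_RInt_continuous (V := R_CompleteNormedModule)).
  intros z Hz. apply continuous_k.
  assert (Rabs b < r).
  { pose proof (Rabs_triang (b - t) t) as Htri. replace (b - t + t) with b in Htri by ring. lra. }
  assert (Rabs z <= Rabs b).
  { unfold Rmin, Rmax in Hz. destruct (Rle_dec 0 b).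
    - rewrite !Rabs_right by lra. lra.
    - rewrite !Rabs_left1 by lra. lra. }
  lra.
Qed.

Lemma is_derive_sg mu : mu < 1 -> is_derive sg mu (- / (4 * sg mu)).
Proof.
  intros Hmu. unfold sg. auto_derive; [lra|].
  change ((1 + - mu) * / 2) with ((1 - mu) / 2).
  assert (0 < sqrt ((1 - mu) / 2)) by (apply sqrt_lt_R0; lra). field. lra.
Qed.

Lemma sg_range mu : -1 - 2 * e < mu < 1 -> 0 < sg mu /\ Rabs (sg mu) < r.
Proof.
  intros Hmu. assert (0 < sg mu) by (apply sqrt_lt_R0; lra).
  split; auto. rewrite Rabs_right by lra. apply sqrt_lt_1_alt. lra.
Qed.

Lemma is_derive_Phi mu : -1 - 2 * e < mu < 1 -> is_derive Phi mu (F0_integrand mu).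
Proof.
  intros Hmu. destruct (sg_range mu Hmu) as [Hs Hr].
  pose proof (is_derive_comp A sg mu _ _ (is_derive_A _ Hr) (is_derive_sg mu (proj2 Hmu))) as H.
  apply (is_derive_scal _ _ (- (2 * sqrt 2))) in H.
  eapply is_derive_eq; [exact H|]. unfold F0_integrand, k, interp.
  assert (Hsq : sg mu * sg mu = (1 - mu) / 2) by (apply sqrt_sqrt; lra).
  assert (Hsq2 : sqrt (1 - mu) = sqrt 2 * sg mu).
  { unfold sg. rewrite <- sqrt_mult_alt by lra. f_equal. field. }
  assert (H2 : sqrt 2 * sqrt 2 = 2) by (apply sqrt_sqrt; lra).
  assert (0 < sqrt 2) by (apply sqrt_lt_R0; lra).
  rewrite Hsq, Hsq2.
  replace (xi + (1 - mu) / 2 * (u1 - xi)) with ((1 + mu) / 2 * xi + (1 - mu) / 2 * u1) by field.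
  R_eq. replace (4 * sg mu) with (2 * (sqrt 2 * sqrt 2) * sg mu) by (rewrite H2; ring).
  field. lra.
Qed.

Lemma continuous_F0_integrand mu : -1 - 2 * e < mu < 1 -> continuous F0_integrand mu.
Proof.
  intros Hmu. unfold F0_integrand.
  apply (continuous_mult (K := R_AbsRing)
    (fun mu => Derive f ((1 + mu) / 2 * xi + (1 - mu) / 2 * u1)) (fun mu => / sqrt (1 - mu))).
  - apply (continuous_comp (fun mu => (1 + mu) / 2 * xi + (1 - mu) / 2 * u1) (Derive f)).
    + eapply continuous_ext; [|apply (continuous_affine ((xi + u1) / 2) ((xi - u1) / 2))].
      intros m. simpl. field.
    + apply (continuous_Derive_n 1).
      replace ((1 + mu) / 2 * xi + (1 - mu) / 2 * u1) with (xi + (1 - mu) / 2 * (u1 - xi)) by field.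
      apply affine_in_01; auto. fold e. lra.
  - apply continuous_Rinv_comp.
    + apply continuous_sqrt_comp.
      eapply continuous_ext; [|apply (continuous_affine 1 (-1))]. intros m. simpl. ring.
    + assert (0 < sqrt (1 - mu)) by (apply sqrt_lt_R0; lra). lra.
Qed.

Lemma continuous_Phi_1 : continuous Phi 1.
Proof.
  apply (continuous_mult (K := R_AbsRing) (fun _ => - (2 * sqrt 2)) (fun mu => A (sg mu)));
    [apply continuous_const|].
  apply (continuous_comp sg A).
  - apply continuous_sqrt_comp.
    eapply continuous_ext; [|apply (continuous_affine (1/2) (-1/2))]. intros m. simpl. field.
  - eapply is_derive_continuous, is_derive_A.
    unfold sg. replace ((1 - 1) / 2) with 0 by field.
    rewrite sqrt_0, Rabs_R0. unfold r. rewrite <- sqrt_0. apply sqrt_lt_1_alt.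
    pose proof e_pos. lra.
Qed.

Lemma is_RInt_gen_F0_integrand :
  is_RInt_gen F0_integrand (at_point (-1)) (at_left 1) (Phi 1 - Phi (-1)).
Proof.
  pose proof e_pos.
  assert (Hin : forall b x, -1 < b < 1 -> Rmin (-1) b <= x <= Rmax (-1) b -> -1 - 2 * e < x < 1).
  { intros b x Hb Hx. rewrite Rmin_left, Rmax_right in Hx; lra. }
  apply is_RInt_gen_ext with (f := Derive Phi).
  - apply filter_prod_at_point_at_left; [lra|]. intros b Hb x Hx.
    apply is_derive_unique, is_derive_Phi, (Hin b); [easy | simpl in Hx; lra].
  - apply (is_RInt_gen_Derive Phi (Phi (-1)) (Phi 1)).
    + apply filter_prod_at_point_at_left; [lra|]. intros b Hb x Hx.
      eexists. apply is_derive_Phi, (Hin b); auto.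
    + apply filter_prod_at_point_at_left; [lra|]. intros b Hb x Hx.
      specialize (Hin b x Hb Hx).
      apply continuous_ext_loc with (g := F0_integrand); [|now apply continuous_F0_integrand].
      apply (locally_of_open_interval (-1 - 2 * e) 1); auto.
      intros y Hy. symmetry. apply is_derive_unique, is_derive_Phi, Hy.
    + intros P HP. exact (locally_singleton _ _ HP).
    + eapply filterlim_filter_le_1; [apply filter_le_within | apply continuous_Phi_1].
Qed.

Lemma F0_eq_F0s : F0 f xi u1 = F0s f u1 xi.
Proof.
  unfold F0. fold F0_integrand.
  rewrite (is_RInt_gen_unique _ _ is_RInt_gen_F0_integrand).
  unfold Phi, sg. replace ((1 - 1) / 2) with 0 by field. replace ((1 - -1) / 2) with 1 by field.
  rewrite sqrt_0, sqrt_1. unfold A. rewrite RInt_point.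
  assert (0 < sqrt 2) by (apply sqrt_lt_R0; lra).
  change (zero : R) with 0. unfold F0s.
  change (RInt k 0 1) with (RInt (fun s => Derive f (interp xi u1 s)) 0 1).
  field. lra.
Qed.
End Substitution.

Lemma is_derive_G0 u1 xi : 0 < xi < 1 -> 0 < u1 < 1 ->
  is_derive (G0 f u1) xi (- G0_numer f u1 xi / U0 xi u1 ^ 2).
Proof.
  intros Hxi Hu1. pose proof (U0_pos xi u1 Hxi Hu1) as HU0.
  pose proof (is_derive_div (fun x => - F0s f u1 x) (fun x => U0 x u1) xi _ _
    (is_derive_opp _ _ _ (is_derive_F0s u1 xi Hxi Hu1)) (is_derive_U0 u1 xi) ltac:(lra)) as H.
  eapply is_derive_ext_loc; [|eapply is_derive_eq; [exact H|]].
  - apply (locally_of_open_interval 0 1); auto. intros y Hy. unfold G0. now rewrite F0_eq_F0s.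
  - unfold G0_numer. R_eq. field. lra.
Qed.

Lemma critical_point_iff u1 xi : 0 < u1 < 1 ->
  critical_point f u1 xi <-> 0 < xi < 1 /\ G0_numer f u1 xi = 0.
Proof.
  intros Hu1. split.
  - intros [Hxi HD]. split; [easy|].
    pose proof (is_derive_unique _ _ _ HD) as E1.
    rewrite (is_derive_unique _ _ _ (is_derive_G0 u1 xi Hxi Hu1)) in E1.
    pose proof (U0_pos xi u1 Hxi Hu1).
    apply (f_equal (fun z => - z * U0 xi u1 ^ 2)) in E1. field_simplify in E1; lra.
  - intros [Hxi Hp]. split; [easy|]. eapply is_derive_eq; [apply is_derive_G0; auto|].
    rewrite Hp. pose proof (U0_pos xi u1 Hxi Hu1). R_eq. field. lra.
Qed.

Lemma is_derive_G0_numer u1 xi : 0 < xi < 1 -> 0 < u1 < 1 ->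
  is_derive (G0_numer f u1) xi (F0s_xixi f u1 xi * U0 xi u1).
Proof.
  intros Hxi Hu1.
  pose proof (is_derive_mult (K := R_AbsRing) (F0s_xi f u1) (fun x => U0 x u1) xi _ _
    (is_derive_F0s_xi u1 xi Hxi Hu1) (is_derive_U0 u1 xi) Rmult_comm) as H1.
  pose proof (is_derive_scal _ _ (4 / 3) _ (is_derive_F0s u1 xi Hxi Hu1)) as H2.
  eapply is_derive_eq; [exact (is_derive_minus _ _ _ _ _ H1 H2)|].
  R_eq. ring.
Qed.

(** * Behaviour as u1 tends to 1 *)

Definition taylor1 u1 x := f x + Derive f x * (u1 - x).
Definition taylor2 u1 x := taylor1 u1 x + Derive_n f 2 x * ((u1 - x) * (u1 - x)) / 2.

Lemma is_derive_taylor1 u1 x : 0 < x < 1 -> is_derive (taylor1 u1) x (Derive_n f 2 x * (u1 - x)).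
Proof.
  intros Hx.
  pose proof (is_derive_affine u1 (-1) x) as Hl.
  pose proof (is_derive_mult (K := R_AbsRing) (Derive f) (fun x => u1 + -1 * x) x _ _
    (is_derive_Derive_n 1 x Hx) Hl Rmult_comm) as H1.
  eapply is_derive_ext; [|eapply is_derive_eq;
    [exact (is_derive_plus _ _ _ _ _ (is_derive_f x Hx) H1)|]].
  - intros t. unfold taylor1. R_eq. ring.
  - R_eq. ring.
Qed.

Lemma is_derive_taylor2 u1 x : 0 < x < 1 ->
  is_derive (taylor2 u1) x (Derive_n f 3 x * ((u1 - x) * (u1 - x) / 2)).
Proof.
  intros Hx.
  assert (Hq : is_derive (fun x => (u1 - x) * (u1 - x) / 2) x (- (u1 - x)))
    by (auto_derive; [easy | field]).
  pose proof (is_derive_mult (K := R_AbsRing) (Derive_n f 2) _ x _ _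
    (is_derive_Derive_n 2 x Hx) Hq Rmult_comm) as H2.
  eapply is_derive_ext; [|eapply is_derive_eq;
    [exact (is_derive_plus _ _ _ _ _ (is_derive_taylor1 u1 x Hx) H2)|]].
  - intros t. unfold taylor2. R_eq. field.
  - R_eq. field.
Qed.

Lemma continuous_Derive_n_mul n (q : R -> R) x : 0 < x < 1 -> ex_derive q x ->
  continuous (fun x => Derive_n f n x * q x) x.
Proof.
  intros Hx [l Hq]. apply (continuous_mult (K := R_AbsRing) (Derive_n f n)).
  - now apply continuous_Derive_n.
  - exact (is_derive_continuous _ _ _ Hq).
Qed.

Lemma taylor2_ge u1 c : 0 <= u1 - c <= 1 ->
  - (Rabs (f c) + Rabs (Derive f c) + Rabs (Derive_n f 2 c)) <= taylor2 u1 c.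
Proof.
  intros Hc. unfold taylor2, taylor1.
  assert (Hq : 0 <= (u1 - c) * (u1 - c) <= 1) by (split; nra).
  pose proof (Rabs_pos (Derive f c)). pose proof (Rabs_pos (Derive_n f 2 c)).
  pose proof (Rle_abs (- f c)). rewrite Rabs_Ropp in *.
  pose proof (Rle_abs (- Derive f c)). pose proof (Rle_abs (- Derive_n f 2 c)).
  rewrite !Rabs_Ropp in *. nra.
Qed.

Section NearOne.
Hypothesis f'_neg : forall u, 0 < u < 1 -> Derive f u < 0.
Hypothesis f_to_m_infty : filterlim f (at_left 1) (Rbar_locally m_infty).
Variable a : R.
Hypothesis a_pos : 0 < a.
Hypothesis f'''_neg_near_0 : forall u, 0 < u < a -> Derive_n f 3 u < 0.
Hypothesis f'''_neg_near_1 : forall u, 1 - a < u < 1 -> Derive_n f 3 u < 0.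

Lemma f_ge_tangent m x : 0 < m -> (forall y, m <= y < 1 -> 0 <= Derive_n f 2 y) ->
  m <= x < 1 -> f m + Derive f m * (x - m) <= f x.
Proof.
  intros Hm Hconv Hx.
  assert (Hd1 : forall y, m <= y < 1 -> Derive f m <= Derive f y).
  { intros y Hy. assert (- Derive f y <= - Derive f m); [|lra].
    apply (nonpos_derive_antitone (fun z => - Derive f z) (fun z => - Derive_n f 2 z)); [lra| |].
    - intros z Hz. apply (is_derive_opp (Derive f)), (is_derive_Derive_n 1). lra.
    - intros z Hz. specialize (Hconv z ltac:(lra)). lra. }
  assert (Derive f m * x - f x <= Derive f m * m - f m); [|lra].
  apply (nonpos_derive_antitone (fun y => Derive f m * y - f y)
    (fun y => Derive f m - Derive f y)); [lra| |].
  - intros y Hy. apply (is_derive_minus (fun y => Derive f m * y) f); [|apply is_derive_f; lra].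
    apply (is_derive_ext (fun y => 0 + Derive f m * y)); [intros t; simpl; ring|].
    apply is_derive_affine.
  - intros y Hy. specialize (Hd1 y ltac:(lra)). lra.
Qed.

Lemma f''_neg_near_1 : exists v, 1 - a < v < 1 /\ forall x, v <= x < 1 -> Derive_n f 2 x < 0.
Proof.
  set (a' := Rmin a (1 / 2)).
  assert (Ha' : 0 < a' <= 1 / 2 /\ a' <= a).
  { pose proof (Rmin_l a (1 / 2)). pose proof (Rmin_r a (1 / 2)).
    pose proof (Rmin_pos a (1 / 2) a_pos ltac:(lra)). unfold a'. lra. }
  destruct (classic (exists w, 1 - a' < w < 1 /\ Derive_n f 2 w < 0)) as [[w [Hw Hw2]]|Hno].
  - exists w. split; [lra|]. intros x Hx.
    assert (Derive_n f 2 x <= Derive_n f 2 w); [|lra].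
    apply (nonpos_derive_antitone (Derive_n f 2) (Derive_n f 3)); [lra| |].
    + intros y Hy. apply is_derive_Derive_n. lra.
    + intros y Hy. apply Rlt_le, f'''_neg_near_1. lra.
  - exfalso. set (m := 1 - a' / 2). assert (Hm : 1 - a' < m < 1) by (unfold m; lra).
    assert (Hconv : forall y, m <= y < 1 -> 0 <= Derive_n f 2 y).
    { intros y Hy. apply Rnot_lt_le. intros Hlt. apply Hno. exists y. split; [lra|easy]. }
    destruct (filterlim_m_infty_at_left_1_lt f (f m + Derive f m) f_to_m_infty) as [d [Hd HdP]].
    set (x := Rmax m (1 - d / 2)).
    assert (Hx : m <= x < 1 /\ 1 - d < x).
    { unfold x, Rmax. destruct (Rle_dec m (1 - d / 2)); lra. }
    pose proof (f_ge_tangent m x ltac:(lra) Hconv (proj1 Hx)).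
    assert (Derive f m < 0) by (apply f'_neg; lra).
    specialize (HdP x ltac:(lra)). nra.
Qed.

Lemma f_drop_near_1 c L : exists d, 0 < d /\ forall u1, 1 - d < u1 < 1 -> L < f c - f u1.
Proof.
  destruct (filterlim_m_infty_at_left_1_lt f (f c - L) f_to_m_infty) as [d [Hd HdP]].
  exists d. split; [easy|]. intros u1 Hu1. specialize (HdP u1 Hu1). lra.
Qed.

Lemma Derive_n3_bounded_above c : c < 1 ->
  exists M, 0 <= M /\ forall x, 0 < x <= c -> Derive_n f 3 x <= M.
Proof.
  intros Hc. destruct (Rle_lt_dec c (a / 2)) as [Hca|Hca].
  - exists 0. split; [lra|]. intros x Hx. apply Rlt_le, f'''_neg_near_0. lra.
  - destruct (continuous_bounded (Derive_n f 3) (a / 2) c) as [B HB]; [lra| |].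
    { intros x Hx. apply continuous_Derive_n. lra. }
    exists (Rabs B). split; [apply Rabs_pos|]. intros x Hx.
    destruct (Rlt_le_dec x (a / 2)) as [Hxa|Hxa].
    + pose proof (f'''_neg_near_0 x ltac:(lra)). pose proof (Rabs_pos B). lra.
    + specialize (HB x ltac:(lra)). pose proof (Rle_abs (Derive_n f 3 x)).
      pose proof (Rle_abs B). lra.
Qed.

Lemma F0s_xixi_neg_right xi u1 : 0 < xi < 1 -> 0 < u1 < 1 -> 1 - a < xi -> 1 - a < u1 ->
  F0s_xixi f u1 xi < 0.
Proof.
  intros Hxi Hu1 Hxa Hua. unfold F0s_xixi.
  apply Rlt_le_trans with (RInt (fun _ => 0) 0 1).
  - apply RInt_lt; [lra | intros; apply continuous_const | |].
    + intros s Hs.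
      apply (continuous_mult (K := R_AbsRing) (fun s => Derive_n f 3 (interp xi u1 s))).
      * apply continuous_comp_interp; auto. intros x Hx. now apply continuous_Derive_n.
      * apply (continuous_mult (K := R_AbsRing)); apply continuous_one_minus_sq.
    + intros s Hs. pose proof (interp_in_01 xi u1 s Hxi Hu1 ltac:(lra)).
      assert (1 - a < interp xi u1 s).
      { assert (Hs2 : 0 <= s * s <= 1) by (split; nra). unfold interp.
        assert (0 <= s * s * (u1 - (1 - a))) by (apply Rmult_le_pos; lra). nra. }
      pose proof (f'''_neg_near_1 (interp xi u1 s) ltac:(lra)).
      assert (0 < (1 - s * s) * (1 - s * s)) by (apply Rmult_lt_0_compat; nra). nra.
  - rewrite RInt_const. change (scal (1 - 0) 0) with ((1 - 0) * 0). lra.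
Qed.

Section Split.
Variables xi c u1 : R.
Hypothesis Hxc : 0 < xi <= c.
Hypothesis Hcu : c < u1 < 1.

(* [sc] is the parameter at which the path [interp xi u1] passes through [c]. *)
Let lam := u1 - xi.
Let sc := sqrt ((c - xi) / lam).
Let g1 s := Derive f (interp xi u1 s).
Let g2 s := Derive_n f 2 (interp xi u1 s) * (1 - s * s).
Let g3 s := Derive_n f 3 (interp xi u1 s) * ((1 - s * s) * (1 - s * s)).

Let xi_01 : 0 < xi < 1.
Proof. lra. Qed.

Let u1_01 : 0 < u1 < 1.
Proof. lra. Qed.

Lemma sc_sq : sc * sc = (c - xi) / lam.
Proof. apply sqrt_sqrt, Rdiv_le_0_compat; unfold lam; lra. Qed.

Lemma sc_range : 0 <= sc <= 1.
Proof.
  split; [apply sqrt_pos|]. rewrite <- sqrt_1. apply sqrt_le_1_alt.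
  apply Rmult_le_reg_r with lam; [unfold lam; lra|].
  unfold Rdiv. rewrite Rmult_assoc, Rinv_l; unfold lam; lra.
Qed.

Lemma interp_sc : interp xi u1 sc = c.
Proof. apply interp_sqrt; lra. Qed.

Lemma interp_head s : 0 <= s <= sc -> xi <= interp xi u1 s <= c.
Proof.
  intros Hs. split.
  - rewrite <- (interp_0 xi u1) at 1. apply interp_le_interp; lra.
  - rewrite <- interp_sc. apply interp_le_interp; lra.
Qed.

Lemma interp_tail s : sc <= s <= 1 -> c <= interp xi u1 s <= u1.
Proof.
  intros Hs. pose proof sc_range. split.
  - rewrite <- interp_sc. apply interp_le_interp; lra.
  - rewrite <- (interp_1 xi u1) at 2. apply interp_le_interp; lra.
Qed.

Lemma ex_RInt_g1 p q : 0 <= p <= q -> q <= 1 -> ex_RInt g1 p q.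
Proof. intros. apply ex_RInt_interp; auto. apply (continuous_Derive_n 1). Qed.

Lemma ex_RInt_g2 p q : 0 <= p <= q -> q <= 1 -> ex_RInt g2 p q.
Proof.
  intros. apply ex_RInt_interp_mul; auto.
  - apply (continuous_Derive_n 2).
  - apply continuous_one_minus_sq.
Qed.

Lemma ex_RInt_g3 p q : 0 <= p <= q -> q <= 1 -> ex_RInt g3 p q.
Proof.
  intros. apply ex_RInt_interp_mul; auto.
  - apply (continuous_Derive_n 3).
  - apply continuous_one_minus_sq_sq.
Qed.

Lemma F0s_split : F0s f u1 xi = RInt g1 0 sc + RInt g1 sc 1.
Proof.
  pose proof sc_range. symmetry.
  apply (RInt_Chasles (V := R_CompleteNormedModule)); apply ex_RInt_g1; lra.
Qed.

Lemma F0s_xi_split : F0s_xi f u1 xi = RInt g2 0 sc + RInt g2 sc 1.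
Proof.
  pose proof sc_range. symmetry.
  apply (RInt_Chasles (V := R_CompleteNormedModule)); apply ex_RInt_g2; lra.
Qed.

Lemma F0s_xixi_split : F0s_xixi f u1 xi = RInt g3 0 sc + RInt g3 sc 1.
Proof.
  pose proof sc_range. symmetry.
  apply (RInt_Chasles (V := R_CompleteNormedModule)); apply ex_RInt_g3; lra.
Qed.

Lemma F0s_xixi_head_le M : 0 <= M -> (forall x, xi <= x <= c -> Derive_n f 3 x <= M) ->
  RInt g3 0 sc <= M.
Proof.
  intros HM H3. pose proof sc_range.
  apply Rle_trans with ((sc - 0) * M); [|nra].
  apply RInt_le_const; [lra | apply ex_RInt_g3; lra |].
  intros s Hs. unfold g3. specialize (H3 _ (interp_head s ltac:(lra))).
  assert (0 <= 1 - s * s <= 1) by (split; nra).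
  assert (Hw : 0 <= (1 - s * s) * (1 - s * s) <= 1) by (split; nra).
  destruct (Rle_lt_dec 0 (Derive_n f 3 (interp xi u1 s))); nra.
Qed.

(* On the tail the integrand is nonpositive, so weighting it by s (u1 - xi)^3 <= 1 can
   only increase it, and the weighted integrand is the derivative of [taylor2 u1]
   along the path. *)
Lemma F0s_xixi_tail_le : (forall x, c <= x < 1 -> Derive_n f 3 x <= 0) ->
  RInt g3 sc 1 <= f u1 - taylor2 u1 c.
Proof.
  intros H3. pose proof sc_range.
  pose proof (is_RInt_interp_derive (taylor2 u1)
    (fun x => Derive_n f 3 x * ((u1 - x) * (u1 - x) / 2)) xi u1 sc 1 (is_derive_taylor2 u1)
    (fun x Hx => continuous_Derive_n_mul 3 (fun x => (u1 - x) * (u1 - x) / 2) x Hx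
      ltac:(auto_derive; easy))
    xi_01 u1_01 ltac:(lra) ltac:(lra)) as HI.
  assert (Hu : taylor2 u1 u1 = f u1) by (unfold taylor2, taylor1; field).
  rewrite interp_1, interp_sc, Hu in HI. rewrite <- Rmult_1_l.
  eapply RInt_le_scal_is_RInt; [lra | apply ex_RInt_g3; lra | exact HI |].
  intros s Hs. unfold g3. rewrite u1_minus_interp. fold lam.
  pose proof (interp_tail s ltac:(lra)).
  assert (Hd3 : Derive_n f 3 (interp xi u1 s) <= 0) by (apply H3; lra).
  assert (Hw : 0 <= (1 - s * s) * (1 - s * s)) by (apply Rmult_le_pos; nra).
  assert (Hl : 0 < lam < 1) by (unfold lam; lra).
  assert (Hl3 : 0 <= lam * lam * lam <= 1).
  { assert (0 <= lam * lam <= 1) by (split; nra). split; nra. }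
  assert (Ht : 0 <= s * (lam * lam * lam) <= 1) by (split; nra).
  replace (1 * (Derive_n f 3 (interp xi u1 s) * (lam * (1 - s * s) * (lam * (1 - s * s)) / 2)
      * (2 * s * lam)))
    with (Derive_n f 3 (interp xi u1 s) * ((1 - s * s) * (1 - s * s)) * (s * (lam * lam * lam)))
    by field.
  apply Rmult_nonpos_le_r; [nra | lra].
Qed.

Lemma sc_pos : xi < c -> 0 < sc.
Proof. intros. apply sqrt_lt_R0, Rdiv_lt_0_compat; unfold lam; lra. Qed.

Lemma sc_mul_lam_ge : xi < c -> c - xi <= sc * lam.
Proof.
  intros Hlt. pose proof (sc_pos Hlt). pose proof sc_sq.
  assert (Hl : c - xi <= lam) by (unfold lam; lra).
  assert (Hsq : (sc * lam) * (sc * lam) = (c - xi) * lam).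
  { replace ((sc * lam) * (sc * lam)) with ((sc * sc) * lam * lam) by ring.
    rewrite sc_sq. field. lra. }
  assert (0 < sc * lam) by (apply Rmult_lt_0_compat; lra). nra.
Qed.

Lemma sc_ge : xi < c -> (c - xi) / (1 - xi) <= sc.
Proof.
  intros Hlt. pose proof sc_range.
  assert (Hl : 0 < lam <= 1 - xi) by (unfold lam; lra).
  apply Rle_trans with (sc * sc); [|nra]. rewrite sc_sq.
  unfold Rdiv. apply Rmult_le_compat_l; [lra|]. apply Rinv_le_contravar; lra.
Qed.

Lemma F0s_tail_bounds : xi < c ->
  / (2 * sc * lam) * (f u1 - f c) <= RInt g1 sc 1 <= / (2 * lam) * (f u1 - f c).
Proof.
  intros Hlt. pose proof sc_range. pose proof (sc_pos Hlt).
  assert (Hl : 0 < lam) by (unfold lam; lra).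
  pose proof (is_RInt_interp_derive f (Derive f) xi u1 sc 1 is_derive_f (continuous_Derive_n 1)
    xi_01 u1_01 ltac:(lra) ltac:(lra)) as HI.
  rewrite interp_1, interp_sc in HI.
  assert (Hd : forall t, sc < t < 1 -> Derive f (interp xi u1 t) <= 0).
  { intros t Ht. pose proof (interp_tail t ltac:(lra)). apply Rlt_le, f'_neg. lra. }
  split.
  - eapply RInt_ge_scal_is_RInt; [lra | apply ex_RInt_g1; lra | exact HI |].
    intros t Ht. unfold g1. fold lam.
    replace (/ (2 * sc * lam) * (Derive f (interp xi u1 t) * (2 * t * lam)))
      with (Derive f (interp xi u1 t) * (t / sc)) by (field; lra).
    apply Rmult_nonpos_ge_r; [now apply Hd | apply Rdiv_ge_1; lra].
  - eapply RInt_le_scal_is_RInt; [lra | apply ex_RInt_g1; lra | exact HI |].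
    intros t Ht. unfold g1. fold lam.
    replace (/ (2 * lam) * (Derive f (interp xi u1 t) * (2 * t * lam)))
      with (Derive f (interp xi u1 t) * t) by (field; lra).
    apply Rmult_nonpos_le_r; [now apply Hd | lra].
Qed.

Lemma F0s_xi_tail_bounds : xi < c -> (forall x, c <= x < 1 -> Derive_n f 2 x <= 0) ->
  / (2 * sc * lam * lam) * (f u1 - taylor1 u1 c) <= RInt g2 sc 1
  <= / (2 * lam * lam) * (f u1 - taylor1 u1 c).
Proof.
  intros Hlt H2. pose proof sc_range. pose proof (sc_pos Hlt).
  assert (Hl : 0 < lam) by (unfold lam; lra).
  pose proof (is_RInt_interp_derive (taylor1 u1) (fun x => Derive_n f 2 x * (u1 - x)) xi u1 sc 1
    (is_derive_taylor1 u1)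
    (fun x Hx => continuous_Derive_n_mul 2 (fun x => u1 - x) x Hx ltac:(auto_derive; easy))
    xi_01 u1_01 ltac:(lra) ltac:(lra)) as HI.
  assert (Hu : taylor1 u1 u1 = f u1) by (unfold taylor1; ring).
  rewrite interp_1, interp_sc, Hu in HI.
  assert (Hd : forall t, sc < t < 1 -> g2 t <= 0).
  { intros t Ht. pose proof (interp_tail t ltac:(lra)). unfold g2.
    assert (Derive_n f 2 (interp xi u1 t) <= 0) by (apply H2; lra).
    assert (0 <= 1 - t * t) by nra. nra. }
  split.
  - eapply RInt_ge_scal_is_RInt; [lra | apply ex_RInt_g2; lra | exact HI |].
    intros t Ht. cbv beta. rewrite u1_minus_interp. fold lam.
    replace (/ (2 * sc * lam * lam) * (Derive_n f 2 (interp xi u1 t) * (lam * (1 - t * t))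
        * (2 * t * lam))) with (g2 t * (t / sc)) by (unfold g2; field; lra).
    apply Rmult_nonpos_ge_r; [now apply Hd | apply Rdiv_ge_1; lra].
  - eapply RInt_le_scal_is_RInt; [lra | apply ex_RInt_g2; lra | exact HI |].
    intros t Ht. cbv beta. rewrite u1_minus_interp. fold lam.
    replace (/ (2 * lam * lam) * (Derive_n f 2 (interp xi u1 t) * (lam * (1 - t * t))
        * (2 * t * lam))) with (g2 t * t) by (unfold g2; field; lra).
    apply Rmult_nonpos_le_r; [now apply Hd | lra].
Qed.

Lemma F0s_head_abs_le B : (forall x, xi <= x <= c -> Rabs (Derive f x) <= B) ->
  Rabs (RInt g1 0 sc) <= B.
Proof.
  intros HB. pose proof sc_range. pose proof (HB xi ltac:(lra)).
  pose proof (Rabs_pos (Derive f xi)).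
  apply Rle_trans with ((sc - 0) * B); [|nra].
  apply abs_RInt_le_const; [lra | apply ex_RInt_g1; lra |].
  intros t Ht. apply HB, interp_head. lra.
Qed.

Lemma F0s_xi_head_abs_le B : (forall x, xi <= x <= c -> Rabs (Derive_n f 2 x) <= B) ->
  Rabs (RInt g2 0 sc) <= B.
Proof.
  intros HB. pose proof sc_range. pose proof (HB xi ltac:(lra)).
  pose proof (Rabs_pos (Derive_n f 2 xi)).
  apply Rle_trans with ((sc - 0) * B); [|nra].
  apply abs_RInt_le_const; [lra | apply ex_RInt_g2; lra |].
  intros t Ht. unfold g2. rewrite Rabs_mult.
  specialize (HB _ (interp_head t ltac:(lra))).
  pose proof (Rabs_pos (Derive_n f 2 (interp xi u1 t))).
  assert (Rabs (1 - t * t) <= 1) by (rewrite Rabs_right; nra). nra.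
Qed.

Lemma G0_numer_ge_split B1 B2 : xi < c -> (forall x, c <= x < 1 -> Derive_n f 2 x <= 0) ->
  (forall x, xi <= x <= c -> Rabs (Derive f x) <= B1) ->
  (forall x, xi <= x <= c -> Rabs (Derive_n f 2 x) <= B2) ->
  - (2 * B2 + 4 / 3 * B1) + (f c - f u1) / (2 * lam) * (4 / 3 - U0 xi u1 / (sc * lam))
  <= G0_numer f u1 xi.
Proof.
  intros Hlt H2 HB1 HB2. pose proof (sc_pos Hlt). pose proof sc_range.
  assert (Hl : 0 < lam) by (unfold lam; lra).
  assert (HU : 0 < U0 xi u1 <= 2) by (unfold U0; lra).
  assert (Hc' : Derive f c < 0) by (apply f'_neg; lra).
  unfold G0_numer. rewrite F0s_split, F0s_xi_split.
  pose proof (Rabs_le_between _ _ (F0s_head_abs_le B1 HB1)) as Hh1.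
  pose proof (Rabs_le_between _ _ (F0s_xi_head_abs_le B2 HB2)) as Hh2.
  destruct (F0s_tail_bounds Hlt) as [_ Ht1]. destruct (F0s_xi_tail_bounds Hlt H2) as [Ht2 _].
  assert (S1 : U0 xi u1 * (/ (2 * sc * lam * lam) * (f u1 - f c))
      <= U0 xi u1 * RInt g2 sc 1).
  { apply Rmult_le_compat_l; [lra|]. eapply Rle_trans; [|exact Ht2].
    apply Rmult_le_compat_l.
    - left. apply Rinv_0_lt_compat. repeat apply Rmult_lt_0_compat; lra.
    - unfold taylor1. assert (0 < u1 - c) by lra. nra. }
  assert (S2 : - (2 * B2) <= RInt g2 0 sc * U0 xi u1) by nra.
  replace ((f c - f u1) / (2 * lam) * (4 / 3 - U0 xi u1 / (sc * lam)))
    with (U0 xi u1 * (/ (2 * sc * lam * lam) * (f u1 - f c)) - 4 / 3 * (/ (2 * lam) * (f u1 - f c)))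
    by (field; lra).
  lra.
Qed.

Lemma G0_numer_le_split B1 B2 : xi < c -> (forall x, c <= x < 1 -> Derive_n f 2 x <= 0) ->
  (forall x, xi <= x <= c -> Rabs (Derive f x) <= B1) ->
  (forall x, xi <= x <= c -> Rabs (Derive_n f 2 x) <= B2) ->
  G0_numer f u1 xi <= 2 * B2 + 4 / 3 * B1 + Rabs (Derive f c) / ((c - xi) * (c - xi))
    + (f c - f u1) / (2 * lam) * (4 / (3 * sc) - U0 xi u1 / lam).
Proof.
  intros Hlt H2 HB1 HB2. pose proof (sc_pos Hlt). pose proof sc_range.
  assert (Hl : c - xi <= lam) by (unfold lam; lra).
  assert (HU : 0 < U0 xi u1 <= 2) by (unfold U0; lra).
  assert (Hc' : Derive f c < 0) by (apply f'_neg; lra).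
  unfold G0_numer. rewrite F0s_split, F0s_xi_split.
  pose proof (Rabs_le_between _ _ (F0s_head_abs_le B1 HB1)) as Hh1.
  pose proof (Rabs_le_between _ _ (F0s_xi_head_abs_le B2 HB2)) as Hh2.
  destruct (F0s_tail_bounds Hlt) as [Ht1 _]. destruct (F0s_xi_tail_bounds Hlt H2) as [_ Ht2].
  assert (Hslope : U0 xi u1 * (/ (2 * lam * lam) * (- Derive f c * (u1 - c)))
      <= Rabs (Derive f c) / ((c - xi) * (c - xi))).
  { rewrite Rabs_left by lra. unfold Rdiv.
    replace (U0 xi u1 * (/ (2 * lam * lam) * (- Derive f c * (u1 - c))))
      with (- Derive f c * (U0 xi u1 / 2 * (u1 - c)) * / (lam * lam)) by (field; lra).
    assert (0 <= U0 xi u1 / 2 * (u1 - c) <= 1) by (split; nra).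
    apply Rmult_le_compat.
    - nra.
    - left. apply Rinv_0_lt_compat. nra.
    - nra.
    - apply Rinv_le_contravar; nra. }
  assert (S1 : U0 xi u1 * RInt g2 sc 1 <= U0 xi u1 * (/ (2 * lam * lam) * (f u1 - f c))
      + U0 xi u1 * (/ (2 * lam * lam) * (- Derive f c * (u1 - c)))).
  { rewrite <- Rmult_plus_distr_l. apply Rmult_le_compat_l; [lra|].
    eapply Rle_trans; [exact Ht2|]. right. unfold taylor1. field. lra. }
  assert (S2 : RInt g2 0 sc * U0 xi u1 <= 2 * B2) by nra.
  replace ((f c - f u1) / (2 * lam) * (4 / (3 * sc) - U0 xi u1 / lam))
    with (U0 xi u1 * (/ (2 * lam * lam) * (f u1 - f c)) - 4 / 3 * (/ (2 * sc * lam) * (f u1 - f c)))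
    by (field; lra).
  lra.
Qed.

Lemma G0_numer_lower_bound B1 B2 : xi < c -> (forall x, c <= x < 1 -> Derive_n f 2 x <= 0) ->
  (forall x, xi <= x <= c -> Rabs (Derive f x) <= B1) ->
  (forall x, xi <= x <= c -> Rabs (Derive_n f 2 x) <= B2) ->
  0 <= f c - f u1 -> 0 <= 4 / 3 - (4 * xi + 2) / (3 * (c - xi)) ->
  - (2 * B2 + 4 / 3 * B1) + (f c - f u1) / 2 * (4 / 3 - (4 * xi + 2) / (3 * (c - xi)))
  <= G0_numer f u1 xi.
Proof.
  intros Hlt H2 HB1 HB2 Hgap Hkap.
  pose proof (G0_numer_ge_split B1 B2 Hlt H2 HB1 HB2).
  pose proof (sc_mul_lam_ge Hlt) as Hscl. pose proof (sc_pos Hlt).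
  assert (Hl : 0 < lam < 1) by (unfold lam; lra).
  assert (Hbr : 4 / 3 - (4 * xi + 2) / (3 * (c - xi)) <= 4 / 3 - U0 xi u1 / (sc * lam)).
  { assert (U0 xi u1 / (sc * lam) <= (4 * xi + 2) / (3 * (c - xi))); [|lra].
    apply Rle_trans with (U0 xi u1 / (c - xi)).
    - apply Rmult_le_compat_l; [unfold U0; lra|]. apply Rinv_le_contravar; lra.
    - replace ((4 * xi + 2) / (3 * (c - xi))) with ((4 * xi + 2) / 3 / (c - xi)) by (field; lra).
      apply Rmult_le_compat_r; [left; apply Rinv_0_lt_compat; lra | unfold U0; lra]. }
  assert ((f c - f u1) / 2 * (4 / 3 - (4 * xi + 2) / (3 * (c - xi)))
      <= (f c - f u1) / (2 * lam) * (4 / 3 - U0 xi u1 / (sc * lam))).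
  { apply Rmult_le_compat; [lra | easy | | easy].
    unfold Rdiv. apply Rmult_le_compat_l; [easy|]. apply Rinv_le_contravar; lra. }
  lra.
Qed.

Lemma G0_numer_upper_bound B1 B2 : xi < c -> (forall x, c <= x < 1 -> Derive_n f 2 x <= 0) ->
  (forall x, xi <= x <= c -> Rabs (Derive f x) <= B1) ->
  (forall x, xi <= x <= c -> Rabs (Derive_n f 2 x) <= B2) ->
  0 <= f c - f u1 ->
  0 <= (4 * xi + 2 * c) / (3 * (1 - xi)) - 4 * (1 - xi) / (3 * (c - xi)) ->
  G0_numer f u1 xi <= 2 * B2 + 4 / 3 * B1 + Rabs (Derive f c) / ((c - xi) * (c - xi))
    - (f c - f u1) / 2 * ((4 * xi + 2 * c) / (3 * (1 - xi)) - 4 * (1 - xi) / (3 * (c - xi))).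
Proof.
  intros Hlt H2 HB1 HB2 Hgap Hkap.
  pose proof (G0_numer_le_split B1 B2 Hlt H2 HB1 HB2).
  pose proof (sc_ge Hlt) as Hsc. pose proof (sc_pos Hlt).
  assert (Hl : c - xi <= lam <= 1 - xi) by (unfold lam; lra).
  set (kap := (4 * xi + 2 * c) / (3 * (1 - xi)) - 4 * (1 - xi) / (3 * (c - xi))).
  assert (Hbr : 4 / (3 * sc) - U0 xi u1 / lam <= - kap).
  { assert (4 / (3 * sc) <= 4 * (1 - xi) / (3 * (c - xi))).
    { replace (4 * (1 - xi) / (3 * (c - xi))) with (4 / (3 * ((c - xi) / (1 - xi))))
        by (field; lra).
      apply Rmult_le_compat_l; [lra|]. apply Rinv_le_contravar; [|lra].
      apply Rmult_lt_0_compat; [lra | apply Rdiv_lt_0_compat; lra]. }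
    assert ((4 * xi + 2 * c) / (3 * (1 - xi)) <= U0 xi u1 / lam).
    { apply Rle_trans with (U0 xi u1 / (1 - xi)).
      - replace ((4 * xi + 2 * c) / (3 * (1 - xi))) with ((4 * xi + 2 * c) / 3 / (1 - xi))
          by (field; lra).
        apply Rmult_le_compat_r; [left; apply Rinv_0_lt_compat; lra | unfold U0; lra].
      - apply Rmult_le_compat_l; [unfold U0; lra|]. apply Rinv_le_contravar; lra. }
    unfold kap. lra. }
  assert ((f c - f u1) / (2 * lam) * (4 / (3 * sc) - U0 xi u1 / lam) <= - ((f c - f u1) / 2 * kap)).
  { apply Rle_trans with (- ((f c - f u1) / (2 * lam) * kap)).
    - rewrite Ropp_mult_distr_r. apply Rmult_le_compat_l; [apply Rdiv_le_0_compat; lra | easy].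
    - apply Ropp_le_contravar, Rmult_le_compat_r; [easy|].
      unfold Rdiv. apply Rmult_le_compat_l; [lra|]. apply Rinv_le_contravar; lra. }
  fold kap. lra.
Qed.
End Split.

Lemma F0s_xixi_neg_near_1 : exists d, 0 < d /\
  forall u1 xi, 1 - d < u1 < 1 -> 0 < xi < 1 -> F0s_xixi f u1 xi < 0.
Proof.
  set (c := 1 - Rmin a 1 / 2).
  assert (Hc : 1 - a < c /\ 1 / 2 <= c < 1).
  { pose proof (Rmin_l a 1). pose proof (Rmin_r a 1). pose proof (Rmin_pos a 1 a_pos ltac:(lra)).
    unfold c. lra. }
  destruct (Derive_n3_bounded_above c ltac:(lra)) as [M [HM HM3]].
  set (K := Rabs (f c) + Rabs (Derive f c) + Rabs (Derive_n f 2 c)).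
  destruct (f_drop_near_1 c (M + K + f c)) as [d [Hd Hdrop]].
  exists (Rmin d (1 - c)). split; [apply Rmin_pos; lra|].
  intros u1 xi Hu1 Hxi. pose proof (Rmin_l d (1 - c)). pose proof (Rmin_r d (1 - c)).
  specialize (Hdrop u1 ltac:(lra)).
  destruct (Rle_lt_dec xi c) as [Hxc|Hxc].
  - rewrite (F0s_xixi_split xi c u1) by lra.
    pose proof (F0s_xixi_head_le xi c u1 ltac:(lra) ltac:(lra) M HM
      (fun x Hx => HM3 x ltac:(lra))) as Hhead.
    pose proof (F0s_xixi_tail_le xi c u1 ltac:(lra) ltac:(lra)
      (fun x Hx => Rlt_le _ _ (f'''_neg_near_1 x ltac:(lra)))) as Htail.
    pose proof (taylor2_ge u1 c ltac:(lra)) as Htaylor. fold K in Htaylor. lra.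
  - apply F0s_xixi_neg_right; lra.
Qed.

(* The coefficients of (f c - f u1) / 2 in [G0_numer_lower_bound] and
   [G0_numer_upper_bound]; as c -> 1 they tend to +-(2 - 8 xi) / (3 (1 - xi)). *)
Lemma coeff_pos_below_quarter xi c : 0 < xi < 1 / 4 -> xi + 3 / 4 <= c ->
  0 < 4 / 3 - (4 * xi + 2) / (3 * (c - xi)).
Proof.
  intros Hxi Hc.
  assert ((4 * xi + 2) / (3 * (c - xi)) <= (4 * xi + 2) / (9 / 4)).
  { apply Rmult_le_compat_l; [lra|]. apply Rinv_le_contravar; lra. }
  lra.
Qed.

Lemma coeff_pos_above_quarter xi c : 1 / 4 < xi < 1 / 2 ->
  1 - (1 - xi) * (8 * xi - 2) / 12 <= c < 1 ->
  0 < (4 * xi + 2 * c) / (3 * (1 - xi)) - 4 * (1 - xi) / (3 * (c - xi)).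
Proof.
  intros Hxi Hc.
  assert (0 < (1 - xi) * (8 * xi - 2)) by (apply Rmult_lt_0_compat; lra).
  assert (Hid : (4 * xi + 2 * c) * (c - xi) - 4 * (1 - xi) * (1 - xi)
    = (1 - xi) * (8 * xi - 2) - (1 - c) * (2 * xi + 4) + 2 * ((1 - c) * (1 - c))) by ring.
  assert (Hxc : xi < c) by nra.
  replace ((4 * xi + 2 * c) / (3 * (1 - xi)) - 4 * (1 - xi) / (3 * (c - xi)))
    with (((4 * xi + 2 * c) * (c - xi) - 4 * (1 - xi) * (1 - xi)) / (3 * (1 - xi) * (c - xi)))
    by (field; lra).
  apply Rdiv_lt_0_compat; [nra|]. apply Rmult_lt_0_compat; lra.
Qed.

Lemma derivative_bounds_on xi c : 0 < xi -> c < 1 -> xi <= c ->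
  exists B1 B2, 0 <= B1 /\ 0 <= B2 /\
    (forall x, xi <= x <= c -> Rabs (Derive f x) <= B1) /\
    (forall x, xi <= x <= c -> Rabs (Derive_n f 2 x) <= B2).
Proof.
  intros Hxi Hc Hxc.
  destruct (continuous_bounded (Derive f) xi c Hxc) as [B1 HB1].
  { intros x Hx. apply (continuous_Derive_n 1). lra. }
  destruct (continuous_bounded (Derive_n f 2) xi c Hxc) as [B2 HB2].
  { intros x Hx. apply continuous_Derive_n. lra. }
  exists B1, B2. specialize (HB1 xi ltac:(lra)) as H1. specialize (HB2 xi ltac:(lra)) as H2.
  pose proof (Rabs_pos (Derive f xi)). pose proof (Rabs_pos (Derive_n f 2 xi)).
  repeat split; auto; lra.
Qed.

Lemma G0_numer_pos_near_1 xi : 0 < xi < 1 / 4 ->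
  exists d, 0 < d /\ forall u1, 1 - d < u1 < 1 -> 0 < G0_numer f u1 xi.
Proof.
  intros Hxi. destruct f''_neg_near_1 as [v [Hv Hv2]].
  set (c := Rmax v (xi + 3 / 4)).
  assert (Hc : v <= c /\ xi + 3 / 4 <= c < 1).
  { unfold c, Rmax. destruct (Rle_dec v (xi + 3 / 4)); lra. }
  destruct (derivative_bounds_on xi c) as [B1 [B2 [HB1p [HB2p [HB1 HB2]]]]]; [lra..|].
  set (kap := 4 / 3 - (4 * xi + 2) / (3 * (c - xi))).
  pose proof (coeff_pos_below_quarter xi c Hxi (proj1 (proj2 Hc))) as Hkap. fold kap in Hkap.
  destruct (f_drop_near_1 c (2 * (2 * B2 + 4 / 3 * B1) / kap)) as [d [Hd Hdrop]].
  exists (Rmin d (1 - c)). split; [apply Rmin_pos; lra|].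
  intros u1 Hu1. pose proof (Rmin_l d (1 - c)). pose proof (Rmin_r d (1 - c)).
  destruct (lt_half_mul_of_div_lt (2 * B2 + 4 / 3 * B1) kap _ ltac:(lra) Hkap
    (Hdrop u1 ltac:(lra))) as [Hpos Hgap].
  pose proof (G0_numer_lower_bound xi c u1 ltac:(lra) ltac:(lra) B1 B2 ltac:(lra)
    (fun x Hx => Rlt_le _ _ (Hv2 x ltac:(lra))) HB1 HB2 ltac:(lra) (Rlt_le _ _ Hkap)) as Hlow.
  fold kap in Hlow. lra.
Qed.

Lemma G0_numer_neg_near_1 xi : 1 / 4 < xi < 1 / 2 ->
  exists d, 0 < d /\ forall u1, 1 - d < u1 < 1 -> G0_numer f u1 xi < 0.
Proof.
  intros Hxi. destruct f''_neg_near_1 as [v [Hv Hv2]].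
  set (t0 := (1 - xi) * (8 * xi - 2) / 12).
  assert (Ht0 : 0 < t0 < 1 - xi).
  { assert (0 < (1 - xi) * (8 * xi - 2)) by (apply Rmult_lt_0_compat; lra).
    assert ((1 - xi) * (8 * xi - 2) < (1 - xi) * 12) by (apply Rmult_lt_compat_l; lra).
    unfold t0. lra. }
  set (c := Rmax v (1 - t0)).
  assert (Hc : v <= c /\ 1 - t0 <= c < 1).
  { unfold c, Rmax. destruct (Rle_dec v (1 - t0)); lra. }
  destruct (derivative_bounds_on xi c) as [B1 [B2 [HB1p [HB2p [HB1 HB2]]]]]; [lra..|].
  set (kap := (4 * xi + 2 * c) / (3 * (1 - xi)) - 4 * (1 - xi) / (3 * (c - xi))).
  pose proof (coeff_pos_above_quarter xi c Hxi (proj2 Hc)) as Hkap. fold kap in Hkap.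
  set (K := 2 * B2 + 4 / 3 * B1 + Rabs (Derive f c) / ((c - xi) * (c - xi))).
  assert (HK : 0 <= K).
  { assert (0 <= Rabs (Derive f c) / ((c - xi) * (c - xi)))
      by (apply Rdiv_le_0_compat; [apply Rabs_pos | nra]).
    unfold K. lra. }
  destruct (f_drop_near_1 c (2 * K / kap)) as [d [Hd Hdrop]].
  exists (Rmin d (1 - c)). split; [apply Rmin_pos; lra|].
  intros u1 Hu1. pose proof (Rmin_l d (1 - c)). pose proof (Rmin_r d (1 - c)).
  destruct (lt_half_mul_of_div_lt _ _ _ HK Hkap (Hdrop u1 ltac:(lra))) as [Hpos Hgap].
  pose proof (G0_numer_upper_bound xi c u1 ltac:(lra) ltac:(lra) B1 B2 ltac:(lra)
    (fun x Hx => Rlt_le _ _ (Hv2 x ltac:(lra))) HB1 HB2 ltac:(lra) (Rlt_le _ _ Hkap)) as Hup.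
  fold kap K in Hup. lra.
Qed.

Lemma G0_numer_decreasing u1 : 0 < u1 < 1 ->
  (forall xi, 0 < xi < 1 -> F0s_xixi f u1 xi < 0) ->
  forall x y, 0 < x -> x < y -> y < 1 -> G0_numer f u1 y < G0_numer f u1 x.
Proof.
  intros Hu1 Hneg x y Hx Hxy Hy.
  apply (neg_derive_decreasing (G0_numer f u1) (fun z => F0s_xixi f u1 z * U0 z u1)); [lra| |].
  - intros z Hz. apply is_derive_G0_numer; [lra | easy].
  - intros z Hz. pose proof (Hneg z ltac:(lra)). pose proof (U0_pos z u1 ltac:(lra) Hu1). nra.
Qed.

Lemma critical_point_near_1 xm xp : 0 < xm < 1 / 4 -> 1 / 4 < xp < 1 / 2 ->
  exists d, 0 < d /\ forall u1, 1 - d < u1 < 1 ->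
    (exists! xi, critical_point f u1 xi) /\
    (forall xi, critical_point f u1 xi -> xm < xi < xp).
Proof.
  intros Hm Hp.
  destruct F0s_xixi_neg_near_1 as [d1 [Hd1 Hconc]].
  destruct (G0_numer_pos_near_1 xm Hm) as [d2 [Hd2 Hpos]].
  destruct (G0_numer_neg_near_1 xp Hp) as [d3 [Hd3 Hneg]].
  exists (Rmin d1 (Rmin d2 (Rmin d3 1))). split; [repeat apply Rmin_pos; lra|].
  intros u1 Hu1.
  pose proof (lt_of_Rmin_lt_l _ _ _ (proj1 Hu1)) as H1.
  pose proof (lt_of_Rmin_lt_r _ _ _ (proj1 Hu1)) as H234.
  pose proof (lt_of_Rmin_lt_l _ _ _ H234) as H2. pose proof (lt_of_Rmin_lt_r _ _ _ H234) as H34.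
  pose proof (lt_of_Rmin_lt_l _ _ _ H34) as H3. pose proof (lt_of_Rmin_lt_r _ _ _ H34) as H4.
  assert (Hu : 0 < u1 < 1) by lra.
  destruct (decreasing_unique_zero (G0_numer f u1) xm xp ltac:(lra) ltac:(lra))
    as [[z [Hz Huniq]] Hloc].
  - intros x Hx. exact (is_derive_continuous _ _ _ (is_derive_G0_numer u1 x Hx Hu)).
  - apply G0_numer_decreasing; [easy|]. intros xi Hxi. apply Hconc; lra.
  - apply Hpos; lra.
  - apply Hneg; lra.
  - split.
    + exists z. split; [now apply critical_point_iff|].
      intros y Hy. now apply Huniq, critical_point_iff.
    + intros xi Hxi. apply critical_point_iff in Hxi as [Hxi Hxi0]; [|easy]. now apply Hloc.
Qed.
End NearOne.
End Smooth.

Theorem lemma4p3 (f : R -> R) (Hf : standing_assumptions f) :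
  (exists delta, 0 < delta /\
     forall u1, 1 - delta < u1 < 1 ->
       exists! xi, critical_point f u1 xi) /\
  (forall eps, 0 < eps -> exists delta, 0 < delta /\
     forall u1 xi, 1 - delta < u1 < 1 -> critical_point f u1 xi ->
       Rabs (xi - 1 / 4) < eps).
Proof.
  destruct Hf as [Hsmooth [Hneg [_ [Hlim [a [Ha [Ha0 Ha1]]]]]]].
  pose proof (critical_point_near_1 f Hsmooth Hneg Hlim a Ha Ha0 Ha1) as Hnear.
  split.
  - destruct (Hnear (1 / 8) (3 / 8) ltac:(lra) ltac:(lra)) as [d [Hd Hcrit]].
    exists d. split; [easy|]. intros u1 Hu1. apply Hcrit, Hu1.
  - intros eps Heps.
    set (xm := Rmax (1 / 8) (1 / 4 - eps / 2)). set (xp := Rmin (3 / 8) (1 / 4 + eps / 2)).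
    assert (Hxm : 0 < xm < 1 / 4 /\ 1 / 4 - eps / 2 <= xm).
    { unfold xm, Rmax. destruct (Rle_dec (1 / 8) (1 / 4 - eps / 2)); lra. }
    assert (Hxp : 1 / 4 < xp < 1 / 2 /\ xp <= 1 / 4 + eps / 2).
    { unfold xp, Rmin. destruct (Rle_dec (3 / 8) (1 / 4 + eps / 2)); lra. }
    destruct (Hnear xm xp (proj1 Hxm) (proj1 Hxp)) as [d [Hd Hcrit]].
    exists d. split; [easy|]. intros u1 xi Hu1 Hxi.
    pose proof (proj2 (Hcrit u1 Hu1) xi Hxi). apply Rabs_def1; lra.
Qed.
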